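(* Let $(M,\cdot,1)$ be a monoid, $\Sigma$ a finite alphabet, and $A=(Q,\Sigma,u,i_u,\delta,w,\rho)$ an $M$-DFA. If $A$ is minimal then: 1. $A$ is accessible; 2. for all $p,q\in Q$: if there exists $m\in M$ with $m\cdot\mathcal{A}_p=\mathcal{A}_q$ or $\mathcal{A}_p=m\cdot\mathcal{A}_q$, then $p=q$; 3. for all $p,q\in Q$: if $\mathcal{A}_p=\mathcal{A}_q$ then $p=q$.
   Context: An $M$-DFA is $A=(Q,\Sigma,u,i_u,\delta,w,\rho)$ with $Q$ finite nonempty, initial state $u$, initial value $i_u\in M$, $\delta:Q\times\Sigma\to Q$, $w:Q\times\Sigma\to M$, $\rho:Q\to M$. Write $q\alpha$ for the extension of $\delta$ to words ($q\varepsilon=q$, $q(\alpha\sigma)=\delta(q\alpha,\sigma)$) and $w^*(q,\varepsilon)=1$, $w^*(q,\alpha\sigma)=w^*(q,\alpha)\cdot w(q\alpha,\sigma)$. $A$ recognizes $\mathcal{A}(\alpha)=i_u\cdot w^*(u,\alpha)\cdot\rho(u\alpha)$, and for $q\in Q$, $\mathcal{A}_q(\alpha)=w^*(q,\alpha)\cdot\rho(q\alpha)$. For $m\in M$, $(m\cdot\ell)(\gamma)=m\cdot\ell(\gamma)$. Two $M$-DFAs are equivalent if they recognize the same $M$-language; $A$ is minimal if no equivalent $M$-DFA has fewer states; $A$ is accessible if $Q=\{u\alpha\mid\alpha\in\Sigma^*\}$. *)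

From mathcomp Require Import all_boot.
Set Implicit Arguments. Unset Strict Implicit. Unset Printing Implicit Defensive.

Record monoid := Monoid {
  mcarrier :> Type;
  mmul : mcarrier -> mcarrier -> mcarrier;
  mone : mcarrier;
  mmulA : forall x y z, mmul x (mmul y z) = mmul (mmul x y) z;
  mmul1l : forall x, mmul mone x = x;
  mmul1r : forall x, mmul x mone = x }.

Record mdfa (M : monoid) (Sigma : Type) (Q : finType) := MDFA {
  init : Q;
  ival : M;
  delta : Q -> Sigma -> Q;
  wt : Q -> Sigma -> M;
  rho : Q -> M }.

Section MDFA.
Variables (M : monoid) (Sigma : Type) (Q : finType) (A : mdfa M Sigma Q).

Definition dstar (q : Q) (a : seq Sigma) : Q := foldl (delta A) q a.

(* w^*(q, eps) = 1, w^*(q, alpha sigma) = w^*(q, alpha) . w(q alpha, sigma) *)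
Fixpoint wstar_aux (acc : M) (q : Q) (a : seq Sigma) : M :=
  match a with
  | [::] => acc
  | s :: a' => wstar_aux (mmul acc (wt A q s)) (delta A q s) a'
  end.
Definition wstar (q : Q) (a : seq Sigma) : M := wstar_aux (mone M) q a.

Definition state_lang (q : Q) : seq Sigma -> M :=
  fun a => mmul (wstar q a) (rho A (dstar q a)).

Definition recognized : seq Sigma -> M :=
  fun a => mmul (ival A) (mmul (wstar (init A) a) (rho A (dstar (init A) a))).

Definition accessible : Prop := forall q : Q, exists a : seq Sigma, dstar (init A) a = q.

End MDFA.

Definition lscale (M : monoid) (Sigma : Type) (m : M) (l : seq Sigma -> M) :
  seq Sigma -> M := fun g => mmul m (l g).

Definition mdfa_equiv (M : monoid) (Sigma : Type) (Q1 Q2 : finType)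
  (A : mdfa M Sigma Q1) (B : mdfa M Sigma Q2) : Prop :=
  forall a, recognized A a = recognized B a.

Definition minimal (M : monoid) (Sigma : Type) (Q : finType) (A : mdfa M Sigma Q) : Prop :=
  forall (Q' : finType) (B : mdfa M Sigma Q'), mdfa_equiv A B -> #|Q| <= #|Q'|.

From mathcomp Require Import all_boot.
Set Implicit Arguments. Unset Strict Implicit. Unset Printing Implicit Defensive.

(* Both statements follow from one construction.  Given a set [P] of states, a
   redirection [f] into [P] and weights [g] with [g y . A_(f y) = A_y] for every
   state [y] that can be entered from [P], one obtains an equivalent M-DFA on
   [P] by redirecting each transition into [y] to [f y] and pushing the weight
   [g y] onto it.  A minimal automaton therefore admits no such [P] other than
   the whole of [Q].  Taking for [P] the reachable states (with [f = id] and
   [g = 1]) gives accessibility; if [m . A_p = A_q] with [p <> q], taking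
   [P = Q \ {q}] and redirecting [q] to [p] with weight [m] is a contradiction. *)

Section StateLanguage.
Variables (M : monoid) (Sigma : Type) (Q : finType) (A : mdfa M Sigma Q).

Lemma wstar_auxE acc q a : wstar_aux A acc q a = mmul acc (wstar A q a).
Proof.
elim: a acc q => [|s a IHa] acc q /=; first by rewrite /wstar mmul1r.
by rewrite /wstar /= IHa [in RHS]IHa mmulA mmul1l.
Qed.

Lemma state_lang_nil q : state_lang A q [::] = rho A q.
Proof. exact: mmul1l. Qed.

Lemma state_lang_cons q s a :
  state_lang A q (s :: a) = mmul (wt A q s) (state_lang A (delta A q s) a).
Proof. by rewrite /state_lang /wstar /= wstar_auxE mmul1l mmulA. Qed.

Lemma recognizedE a : recognized A a = mmul (ival A) (state_lang A (init A) a).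
Proof. by []. Qed.

End StateLanguage.

Section Redirect.
Variables (M : monoid) (Sigma : Type) (Q : finType) (A : mdfa M Sigma Q).
Variables (P : pred Q) (f : Q -> Q) (g : Q -> M).

Definition redirects (y : Q) : Prop :=
  P (f y) /\ forall a, mmul (g y) (state_lang A (f y) a) = state_lang A y a.

Hypothesis redirects_init : redirects (init A).
Hypothesis redirects_delta : forall x s, P x -> redirects (delta A x s).

Definition redirect_mdfa : mdfa M Sigma {x : Q | P x} :=
  MDFA (exist _ (f (init A)) redirects_init.1)
       (mmul (ival A) (g (init A)))
       (fun x s => exist _ (f (delta A (val x) s)) (redirects_delta s (valP x)).1)
       (fun x s => mmul (wt A (val x) s) (g (delta A (val x) s)))
       (fun x => rho A (val x)).

Lemma state_lang_redirect x a :
  state_lang redirect_mdfa x a = state_lang A (val x) a.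
Proof.
elim: a x => [|s a IHa] x; first by rewrite !state_lang_nil.
by rewrite !state_lang_cons IHa /= -mmulA (redirects_delta s (valP x)).2.
Qed.

Lemma redirect_mdfa_equiv : mdfa_equiv A redirect_mdfa.
Proof.
move=> a; rewrite !recognizedE state_lang_redirect /= -mmulA.
by rewrite redirects_init.2.
Qed.

Lemma minimal_redirect_total : minimal A -> forall x, P x.
Proof.
move=> /(_ _ _ redirect_mdfa_equiv); rewrite card_sig => leQP x.
have := geq_leqif (subset_leqif_card (subset_predT P)).
by rewrite leQP => /esym /subsetP; apply.
Qed.

End Redirect.

Lemma minimal_scaled_state_lang_eq (M : monoid) (Sigma : Type) (Q : finType)
    (A : mdfa M Sigma Q) p q m :
  minimal A -> (forall a, mmul m (state_lang A p a) = state_lang A q a) -> p = q.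
Proof.
move=> minA mpq; case: (eqVneq p q) => // neq_pq.
pose f x := if x == q then p else x.
pose g x := if x == q then m else mone M.
have redirect_all y : redirects A (predC1 q) f g y.
  rewrite /redirects /f /g; case: eqVneq => [->|neq_yq]; first by split.
  by split=> // a; rewrite mmul1l.
have := minimal_redirect_total (redirect_all _) (fun x s _ => redirect_all _) minA q.
by rewrite /= eqxx.
Qed.

Section Accessible.
Variables (M : monoid) (Sigma : finType) (Q : finType) (A : mdfa M Sigma Q).

Definition delta_rel : rel Q := fun x y => [exists s, delta A x s == y].

Lemma dstarP q x : reflect (exists a, dstar A q a = x) (connect delta_rel q x).
Proof.
apply: (iffP idP) => [/connectP[p] | [a <-]].
  elim: p q => [|y p IHp] q /=; first by exists [::].
  case/andP=> /existsP[s /eqP <-] /IHp/[apply] [[a <-]].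
  by exists (s :: a).
elim: a q => [|s a IHa] q; first exact: connect0.
apply: connect_trans (IHa _); apply: connect1; apply/existsP; exists s.
exact: eqxx.
Qed.

Lemma minimal_accessible : minimal A -> accessible A.
Proof.
move=> minA x; apply/dstarP.
have redirect_reachable y : connect delta_rel (init A) y ->
    redirects A (connect delta_rel (init A)) id (fun=> mone M) y.
  by split=> // a; rewrite mmul1l.
apply: (minimal_redirect_total (redirect_reachable _ (connect0 _ _))) => // y s.
move=> reach_y; apply: redirect_reachable; apply: connect_trans reach_y _.
by apply: connect1; apply/existsP; exists s.
Qed.

End Accessible.

Theorem mainTheorem8 (M : monoid) (Sigma : finType) (Q : finType)
  (A : mdfa M Sigma Q) :
  minimal A ->
  [/\ accessible A,
      (forall p q : Q,
         (exists m : M, lscale m (state_lang A p) = state_lang A q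
                        \/ state_lang A p = lscale m (state_lang A q)) ->
         p = q)
    & (forall p q : Q, state_lang A p = state_lang A q -> p = q)].
Proof.
move=> minA; split; first exact: minimal_accessible.
- move=> p q [m [mpq | pmq]].
    by apply: (minimal_scaled_state_lang_eq (m := m) minA) => a; rewrite -mpq.
  by apply/esym/(minimal_scaled_state_lang_eq (m := m) minA) => a; rewrite pmq.
- move=> p q pq; apply: (minimal_scaled_state_lang_eq (m := mone M) minA) => a.
  by rewrite mmul1l pq.
Qed.
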